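(* Let $\mathcal{Q}$ be a parabolic subset of $\mathcal{R}$, $C$ a Weyl chamber with $\mathcal{R}^+(C)\subseteq\mathcal{Q}$, and $\mathrm{s}$ an involution of $\mathcal{R}$. Let $\Phi_C=\mathcal{B}(C)\cap\mathcal{Q}^n$, $\Phi_C^\vee=\mathcal{B}(C)\setminus\Phi_C$, $\Phi_C^{\mathrm{s},+}=\{\alpha\in\Phi_C\mid\mathrm{s}(\alpha)\in\mathcal{R}^+(C)\}$, $\Phi_C^{\mathrm{s},-}=\{\alpha\in\Phi_C\mid\mathrm{s}(\alpha)\in\mathcal{R}^-(C)\}$, and $$\Psi_C=\Big\{\alpha\in\Phi_C^{\mathrm{s},+}\ \Big|\ \mathrm{s}(\alpha)\in\mathcal{Q}^n,\ \alpha\notin\bigcup_{\beta\in\Phi_C^\vee\cup\Phi_C^{\mathrm{s},-}}\mathrm{supp}_C(\mathrm{s}(\beta))\Big\}.$$ Then $\mathcal{Q}_{\Psi_C}$ is the smallest parabolic (equivalently, closed) subset of $\mathcal{R}$ containing $\mathcal{Q}\cup\mathrm{s}(\mathcal{Q})$; in particular $(\mathcal{Q}_{\Psi_C},\mathrm{s})$ is totally real. Consequently $(\mathcal{Q},\mathrm{s})$ is fundamental if and only if $\Psi_C=\emptyset$.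
   Context: $\mathcal{R}$ is a reduced root system in a Euclidean space $V$. Closed subset: $\alpha,\beta\in\mathcal{Q}$, $\alpha+\beta\in\mathcal{R}\Rightarrow\alpha+\beta\in\mathcal{Q}$; parabolic: closed with $\mathcal{Q}\cup(-\mathcal{Q})=\mathcal{R}$. $\mathcal{Q}^n=\{\alpha\in\mathcal{Q}\mid-\alpha\notin\mathcal{Q}\}$. For a Weyl chamber $C$: $\mathcal{R}^\pm(C)$ positive/negative roots, $\mathcal{B}(C)$ simple roots, $\mathrm{supp}_C(\alpha)$ the set of simple roots with nonzero coefficient in $\alpha$. For $\Phi\subseteq\mathcal{B}(C)$, $\mathcal{Q}_\Phi=\mathcal{R}^+(C)\cup\{\alpha\in\mathcal{R}^-(C)\mid\mathrm{supp}_C(\alpha)\cap\Phi=\emptyset\}$ (so $\mathcal{Q}_\emptyset=\mathcal{R}$). An involution of $\mathcal{R}$ is a linear isometric involution $\mathrm{s}$ of $V$ with $\mathrm{s}(\mathcal{R})=\mathcal{R}$. A pair $(\mathcal{Q}',\mathrm{s})$ is totally real if $\mathrm{s}(\mathcal{Q}')=\mathcal{Q}'$; $(\mathcal{Q},\mathrm{s})$ is fundamental if the smallest closed subset of $\mathcal{R}$ containing $\mathcal{Q}\cup\mathrm{s}(\mathcal{Q})$ is $\mathcal{R}$. *)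

From HB Require Import structures.
From mathcomp Require Import all_boot all_order all_algebra.
From mathcomp Require Import boolp classical_sets cardinality fsbigop reals.
Set Implicit Arguments. Unset Strict Implicit. Unset Printing Implicit Defensive.
Import Order.TTheory GRing.Theory Num.Theory.
Local Open Scope ring_scope.
Local Open Scope classical_set_scope.

Section RootSystems.
Variables (R : realType) (n : nat).
Local Notation V := 'rV[R]_n.

Definition dot (u v : V) : R := \sum_(i < n) u 0 i * v 0 i.

Definition refl (a v : V) : V := v - ((2 * dot v a) / dot a a) *: a.

Definition root_system (Rs : set V) : Prop :=
  finite_set Rs /\
  [/\ ~ Rs 0,
      (forall v : V, exists s : seq V, ((forall a, a \in s -> Rs a) /\ v \in <<s>>%VS)),
      (forall a b, Rs a -> Rs b -> Rs (refl a b)),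
      (forall a b, Rs a -> Rs b -> exists z : int, 2 * dot b a / dot a a = z%:~R) &
      (forall a (c : R), Rs a -> Rs (c *: a) -> (c = 1 \/ c = -1))].

Definition closed_subset (Rs Q : set V) : Prop :=
  Q `<=` Rs /\ forall a b, Q a -> Q b -> Rs (a + b) -> Q (a + b).

Definition parabolic (Rs Q : set V) : Prop :=
  closed_subset Rs Q /\ Q `|` [set - a | a in Q] = Rs.

Definition nilpart (Q : set V) : set V := [set a | Q a /\ ~ Q (- a)].

Definition act (S : 'M[R]_n) (v : V) : V := v *m S.

Definition involution (Rs : set V) (S : 'M[R]_n) : Prop :=
  [/\ S *m S = 1%:M, (forall u v, dot (act S u) (act S v) = dot u v) &
      act S @` Rs = Rs].

(* Weyl chambers are parametrised by regular vectors x: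
   C(x) = {y | sign <y,a> = sign <x,a> for all roots a}. *)
Definition regular (Rs : set V) (x : V) : Prop := forall a, Rs a -> dot x a != 0.
Definition chamber (Rs : set V) (x : V) : set V :=
  [set y | forall a, Rs a -> 0 < dot y a * dot x a].

Definition posroots (Rs : set V) (x : V) : set V := [set a | Rs a /\ 0 < dot x a].
Definition negroots (Rs : set V) (x : V) : set V := [set a | Rs a /\ dot x a < 0].

Definition simpleroots (Rs : set V) (x : V) : set V :=
  [set a | posroots Rs x a /\
     ~ exists b c, [/\ posroots Rs x b, posroots Rs x c & a = b + c]].

Definition supp (Rs : set V) (x : V) (a : V) : set V :=
  [set b | simpleroots Rs x b /\
     exists c : V -> R, a = \sum_(g \in simpleroots Rs x) c g *: g /\ c b != 0].

Definition QPhi (Rs : set V) (x : V) (Phi : set V) : set V :=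
  posroots Rs x `|` [set a | negroots Rs x a /\ supp Rs x a `&` Phi = set0].

Definition totally_real (Q : set V) (S : 'M[R]_n) : Prop := act S @` Q = Q.

Definition closure (Rs A : set V) : set V :=
  \bigcap_(Q in [set Q | closed_subset Rs Q /\ A `<=` Q]) Q.

Definition fundamental (Rs Q : set V) (S : 'M[R]_n) : Prop :=
  closure Rs (Q `|` act S @` Q) = Rs.

Definition PhiC Rs x Q := simpleroots Rs x `&` nilpart Q.
Definition PhiCv Rs x Q := simpleroots Rs x `\` PhiC Rs x Q.
Definition PhiCp Rs x Q S := [set a | PhiC Rs x Q a /\ posroots Rs x (act S a)].
Definition PhiCm Rs x Q S := [set a | PhiC Rs x Q a /\ negroots Rs x (act S a)].
Definition PsiC Rs x Q S : set V :=
  [set a | [/\ PhiCp Rs x Q S a, nilpart Q (act S a) &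
     ~ exists b, (PhiCv Rs x Q b \/ PhiCm Rs x Q S b) /\ supp Rs x (act S b) a]].

End RootSystems.

From Pilot Require Import Defs.
From HB Require Import structures.
From mathcomp Require Import all_boot all_order all_algebra.
From mathcomp Require Import boolp classical_sets cardinality fsbigop reals.
From mathcomp Require Import ring lra zify.
Set Implicit Arguments. Unset Strict Implicit. Unset Printing Implicit Defensive.
Import Order.TTheory GRing.Theory Num.Theory.
Local Open Scope ring_scope.
Local Open Scope classical_set_scope.

(* Simple roots have pairwise nonpositive products, hence are linearly independent,
   and every root is a combination of them with coefficients of one sign.  A closed
   set containing the positive roots contains the opposite of a positive root [b]
   iff it contains [- a] for every simple root [a] in the support of [b].  For a
   closed [Q'] containing [Q] and [s(Q)], a case analysis along the definition of
   [Psi_C] puts [- a] in [Q'] for every simple [a] outside [Psi_C], so [Q_Psi] lies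
   in [Q'].  Conversely [Q_Psi] contains [s(g)] for [g] in [Q]: for [a] in [Psi_C],
   the [a]-coordinate of [s(g)] is [sum_b g_b * s(b)_a], and each term is
   nonnegative.  Minimality gives total reality, as [s(Q_Psi)] is closed and
   contains [Q] and [s(Q)]. *)

Section Dot.
Variables (R : realType) (n : nat).
Local Notation V := 'rV[R]_n.

Lemma dotC (u v : V) : dot u v = dot v u.
Proof. by apply: eq_bigr => i _; rewrite mulrC. Qed.

Lemma dotDl (u v w : V) : dot (u + v) w = dot u w + dot v w.
Proof. by rewrite /dot -big_split; apply: eq_bigr => i _; rewrite mxE mulrDl. Qed.

Lemma dotZl (c : R) (u w : V) : dot (c *: u) w = c * dot u w.
Proof. by rewrite /dot mulr_sumr; apply: eq_bigr => i _; rewrite mxE mulrA. Qed.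

Lemma dot0l (w : V) : dot 0 w = 0.
Proof. by rewrite /dot big1 // => i _; rewrite mxE mul0r. Qed.

Lemma dotNl (u w : V) : dot (- u) w = - dot u w.
Proof. by rewrite -scaleN1r dotZl mulN1r. Qed.

Lemma dotBl (u v w : V) : dot (u - v) w = dot u w - dot v w.
Proof. by rewrite dotDl dotNl. Qed.

Lemma dotDr (u v w : V) : dot w (u + v) = dot w u + dot w v.
Proof. by rewrite dotC dotDl !(dotC w). Qed.

Lemma dotZr (c : R) (u w : V) : dot w (c *: u) = c * dot w u.
Proof. by rewrite dotC dotZl dotC. Qed.

Lemma dotNr (u w : V) : dot w (- u) = - dot w u.
Proof. by rewrite dotC dotNl dotC. Qed.

Lemma dotBr (u v w : V) : dot w (u - v) = dot w u - dot w v.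
Proof. by rewrite dotDr dotNr. Qed.

Lemma dot_suml (I : Type) (r : seq I) (F : I -> V) w :
  dot (\sum_(i <- r) F i) w = \sum_(i <- r) dot (F i) w.
Proof.
elim: r => [|a r IH]; first by rewrite !big_nil dot0l.
by rewrite !big_cons dotDl IH.
Qed.

Lemma dot_sumr (I : Type) (r : seq I) (F : I -> V) w :
  dot w (\sum_(i <- r) F i) = \sum_(i <- r) dot w (F i).
Proof. by rewrite dotC dot_suml; apply: eq_bigr => i _; rewrite dotC. Qed.

Lemma dot_ge0 (u : V) : 0 <= dot u u.
Proof. by rewrite sumr_ge0 // => i _; rewrite -expr2 sqr_ge0. Qed.

Lemma dot_eq0 (u : V) : dot u u = 0 -> u = 0.
Proof.
move=> /eqP; rewrite psumr_eq0 => [/allP u0|i _]; last by rewrite -expr2 sqr_ge0.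
apply/rowP => i; rewrite mxE; apply/eqP.
by have := u0 i (mem_index_enum i); rewrite -expr2 sqrf_eq0.
Qed.

End Dot.

Lemma ltn_count (T : eqType) (r : seq T) (p q : pred T) y :
  subpred p q -> y \in r -> q y -> ~~ p y -> (count p r < count q r)%N.
Proof.
move=> pq; elim: r => [//|a r IH] /=; rewrite inE => /orP[/eqP <-|yr] qy npy.
  by rewrite qy (negbTE npy) add0n add1n ltnS sub_count.
rewrite -addnS leq_add ?IH //.
by case: (p a) (pq a) => //= ->.
Qed.

Section RootSystem.
Variables (R : realType) (n : nat) (Rs : set 'rV[R]_n).
Hypothesis hRs : root_system Rs.
Local Notation V := 'rV[R]_n.

Lemma root_finite : finite_set Rs. Proof. by case: hRs. Qed.
Lemma root_neq0 : ~ Rs 0. Proof. by case: hRs => _ []. Qed.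

Lemma root_refl a b : Rs a -> Rs b -> Rs (refl a b).
Proof. by case: hRs => _ [] _ _ + _ _; apply. Qed.

Lemma root_cartan_int a b : Rs a -> Rs b ->
  exists z : int, 2 * dot b a / dot a a = z%:~R.
Proof. by case: hRs => _ [] _ _ _ + _; apply. Qed.

Lemma root_reduced a c : Rs a -> Rs (c *: a) -> c = 1 \/ c = -1.
Proof. by case: hRs => _ [] _ _ _ _; apply. Qed.

Lemma dot_root_gt0 a : Rs a -> 0 < dot a a.
Proof.
move=> Ra; rewrite lt_neqAle dot_ge0 andbT eq_sym; apply/eqP => /dot_eq0 a0.
by apply: root_neq0; rewrite -a0.
Qed.

Lemma rootN a : Rs a -> Rs (- a).
Proof.
move=> Ra; have := root_refl Ra Ra; rewrite /refl -mulrA divff ?gt_eqF ?dot_root_gt0 //.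
by rewrite mulr1 scaler_nat mulr2n opprD addrA subrr add0r.
Qed.

(* Equality in Cauchy-Schwarz forces proportionality, and reducedness does the rest. *)
Lemma roots_dot_sqr_ge a b : Rs a -> Rs b ->
  dot a a * dot b b <= dot a b ^+ 2 -> a = b \/ a = - b.
Proof.
move=> Ra Rb CS; have B0 := dot_root_gt0 Rb.
pose t := dot a b / dot b b; pose w := a - t *: b.
have ww : dot w w * dot b b = dot a a * dot b b - dot a b ^+ 2.
  rewrite /w /t !(dotBl, dotBr, dotZl, dotZr) (dotC b a).
  by field; rewrite gt_eqF.
have w0 : w = 0.
  apply: dot_eq0; apply/eqP; rewrite eq_le dot_ge0 andbT -(pmulr_lle0 _ B0) ww.
  by rewrite subr_le0.
have at_b : a = t *: b by apply/eqP; rewrite -subr_eq0 -/w w0.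
have Rtb : Rs (t *: b) by rewrite -at_b.
have [t1|t1] := root_reduced Rb Rtb.
  by left; rewrite at_b t1 scale1r.
by right; rewrite at_b t1 scaleN1r.
Qed.

(* Unless one of the two Cartan integers is 1 (and [a - b] is then a reflection
   of [a] or of [b]), their product is at least 4, i.e. Cauchy-Schwarz is an equality. *)
Lemma root_subr a b : Rs a -> Rs b -> a != b -> 0 < dot a b -> Rs (a - b).
Proof.
move=> Ra Rb ab d0; have A0 := dot_root_gt0 Ra; have B0 := dot_root_gt0 Rb.
have [p hp] := root_cartan_int Rb Ra; have [q hq] := root_cartan_int Ra Rb.
rewrite (dotC b a) in hq.
have [p1|p1] := eqVneq p 1.
  by move: (root_refl Rb Ra); rewrite /refl hp p1 scale1r.
have [q1|q1] := eqVneq q 1.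
  by move: (rootN (root_refl Ra Rb)); rewrite /refl (dotC b a) hq q1 scale1r opprB.
have p0 : (0 < p)%R by rewrite -(ltr0z R) -hp divr_gt0 ?mulr_gt0.
have q0 : (0 < q)%R by rewrite -(ltr0z R) -hq divr_gt0 ?mulr_gt0.
have pq4 : 4 <= p%:~R * q%:~R :> R.
  by rewrite -intrM (ler_int R 4); move: p1 q1 p0 q0; lia.
have CS : dot a a * dot b b <= dot a b ^+ 2.
  have e4 : 4 * dot a b ^+ 2 = (p%:~R * q%:~R) * (dot a a * dot b b).
    by rewrite -hp -hq; field; rewrite !gt_eqF.
  have AB0 : 0 < dot a a * dot b b by rewrite mulr_gt0.
  by nra.
case: (roots_dot_sqr_ge Ra Rb CS) => ab'; first by rewrite ab' eqxx in ab.
by move: d0; rewrite ab' dotNl oppr_gt0 ltNge ltW.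
Qed.

End RootSystem.

Section Chamber.
Variables (R : realType) (n : nat) (Rs : set 'rV[R]_n) (x : 'rV[R]_n).
Hypothesis hRs : root_system Rs.
Hypothesis hx : regular Rs x.
Local Notation V := 'rV[R]_n.
Local Notation pos := (posroots Rs x).
Local Notation neg := (negroots Rs x).
Local Notation B := (simpleroots Rs x).

Lemma posroot_root a : pos a -> Rs a. Proof. by case. Qed.
Lemma negroot_root a : neg a -> Rs a. Proof. by case. Qed.
Lemma simple_posroot a : B a -> pos a. Proof. by case. Qed.

Lemma root_pos_or_neg a : Rs a -> pos a \/ neg a.
Proof. by move=> Ra; have /lt_total/orP[h|h] := hx Ra; [right|left]. Qed.

Lemma negrootE a : neg a <-> pos (- a).
Proof.
split=> [[Ra h]|[Ra h]]; first by split; [exact: rootN | rewrite dotNr oppr_gt0].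
by split; [rewrite -(opprK a); exact: rootN | rewrite dotNr oppr_gt0 in h].
Qed.

Lemma posroot_negroot a : pos a -> neg a -> False.
Proof. by move=> [_ /lt_trans h1] [_ /h1]; rewrite ltxx. Qed.

Lemma posroot_ind (P : V -> Prop) :
  (forall a, pos a -> (forall b, pos b -> dot x b < dot x a -> P b) -> P a) ->
  forall a, pos a -> P a.
Proof.
move=> IH; pose below a := count (fun b => dot x b < dot x a) (finmap.enum_fset (fset_set Rs)).
suff : forall N a, (below a < N)%N -> pos a -> P a by move=> + a; apply.
elim=> [//|N IHN] a ltaN pa; apply: IH => // b pb ltba; apply: IHN => //.
rewrite -ltnS (leq_trans _ ltaN) // ltnS (@ltn_count _ _ _ _ b) ?ltxx //.
- by move=> z /lt_trans; apply.
- by rewrite in_fset_set ?inE; [case: pb | exact: root_finite].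
Qed.

Lemma posroot_decomp a : pos a -> ~ B a -> exists b c,
  [/\ pos b, pos c, a = b + c, dot x b < dot x a & dot x c < dot x a].
Proof.
move=> pa nBa.
have [b [c [pb pc ea]]] : exists b c, [/\ pos b, pos c & a = b + c].
  by apply: contra_notP nBa => H; split.
exists b, c; split => //; rewrite ea dotDr; case: pb => _ hb; case: pc => _ hc; lra.
Qed.

Lemma dot_simple_le0 a b : B a -> B b -> a != b -> dot a b <= 0.
Proof.
move=> [pa nda] [pb ndb] ab; rewrite leNgt; apply/negP => d0.
have [pab|nab] := root_pos_or_neg (root_subr hRs (posroot_root pa) (posroot_root pb) ab d0).
  by apply: nda; exists (a - b), b; rewrite subrK.
by apply: ndb; exists (b - a), a; split; rewrite ?subrK // -opprB; apply/negrootE.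
Qed.

Definition simples : seq V := finmap.enum_fset (fset_set B).

Lemma simples_finite : finite_set B.
Proof. by apply: (sub_finite_set _ (root_finite hRs)) => a [[]]. Qed.

Lemma mem_simples b : b \in simples <-> B b.
Proof. by rewrite /simples in_fset_set ?inE //; exact: simples_finite. Qed.

Lemma uniq_simples : uniq simples. Proof. exact: finmap.fset_uniq. Qed.

Lemma fsbig_simples (F : V -> V) : \sum_(g \in B) F g = \sum_(g <- simples) F g.
Proof. by rewrite fsbig_finite //; exact: simples_finite. Qed.

(* Pairing with [x] turns the combination into a sum of nonnegative reals. *)
Lemma simple_comb_ge0_eq0 (c : V -> R) : (forall g, 0 <= c g) ->
  \sum_(g <- simples) c g *: g = 0 -> forall g, g \in simples -> c g = 0.
Proof.
move=> c0 s0 g gs.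
have xpos h : h \in simples -> 0 < dot x h by move/mem_simples => [[]].
have /eqP : \sum_(h <- simples) c h * dot x h = 0.
  by rewrite -[RHS](dot0l x) -s0 dotC dot_sumr; apply: eq_bigr => h _; rewrite dotZr.
rewrite big_seq_cond psumr_eq0 => [/allP/(_ g gs)|h /andP[hs _]].
  by rewrite gs /= mulf_eq0 (gt_eqF (xpos g gs)) orbF => /eqP.
by rewrite mulr_ge0 // ltW ?xpos.
Qed.

(* The positive and negative parts of [c] give the same vector [v = w], and
   [dot v w <= 0] because distinct simple roots have nonpositive products. *)
Lemma simples_free (c : V -> R) :
  \sum_(g <- simples) c g *: g = 0 -> forall g, g \in simples -> c g = 0.
Proof.
move=> s0.
pose cp g := if 0 <= c g then c g else 0.
pose cm g := if 0 <= c g then 0 else - c g.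
have cE g : c g = cp g - cm g by rewrite /cp /cm; case: ifP; rewrite ?subr0 ?sub0r ?opprK.
have cp0 g : 0 <= cp g by rewrite /cp; case: ifP.
have cm0 g : 0 <= cm g by rewrite /cm; case: ifPn; rewrite // -ltNge oppr_ge0 => /ltW.
have cpm g : cp g * cm g = 0 by rewrite /cp /cm; case: ifP; rewrite ?mulr0 ?mul0r.
pose v := \sum_(g <- simples) cp g *: g; pose w := \sum_(g <- simples) cm g *: g.
have vw : v = w.
  apply/eqP; rewrite -subr_eq0 -sumrB -[X in _ == X]s0.
  by apply/eqP/eq_bigr => g _; rewrite -scalerBl -cE.
have vw_le0 : dot v w <= 0.
  rewrite dot_suml big_seq sumr_le0 // => g gs.
  rewrite dotZl dot_sumr mulr_sumr big_seq sumr_le0 // => h hs.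
  rewrite dotZr mulrA; have [<-|gh] := eqVneq g h; first by rewrite cpm mul0r.
  by rewrite mulr_ge0_le0 ?mulr_ge0 // dot_simple_le0 //; apply/mem_simples.
have v0 : v = 0 by apply: dot_eq0; apply/eqP; rewrite eq_le dot_ge0 andbT {2}vw.
have w0 : w = 0 by rewrite -vw.
move=> g gs.
by rewrite cE (simple_comb_ge0_eq0 cp0 v0) ?(simple_comb_ge0_eq0 cm0 w0) ?subr0.
Qed.

Definition coords (a : V) (c : V -> R) := a = \sum_(g <- simples) c g *: g.

Lemma coords_simple a : B a -> coords a (fun g => (g == a)%:R).
Proof.
move=> Ba; rewrite /coords (bigD1_seq a) ?uniq_simples //=; last exact/mem_simples.
by rewrite eqxx scale1r big1 ?addr0 // => g /negbTE ->; rewrite scale0r.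
Qed.

Lemma coordsN a c : coords a c -> coords (- a) (fun g => - c g).
Proof. by move->; rewrite -sumrN; apply: eq_bigr => g _; rewrite scaleNr. Qed.

Lemma coordsD a b c d : coords a c -> coords b d -> coords (a + b) (fun g => c g + d g).
Proof. by move=> -> ->; rewrite -big_split; apply: eq_bigr => g _; rewrite scalerDl. Qed.

Lemma posroot_coords_ge0 a : pos a -> exists c, (forall g, 0 <= c g) /\ coords a c.
Proof.
move: a; apply: posroot_ind => a pa IH.
case: (pselect (B a)) => [Ba|nBa].
  by exists (fun g => (g == a)%:R); split; [move=> g; rewrite ler0n | exact: coords_simple].
have [b [c [pb pc ea xb xc]]] := posroot_decomp pa nBa.
have [cb [cb0 rb]] := IH b pb xb; have [cc [cc0 rc]] := IH c pc xc; rewrite ea.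
by exists (fun g => cb g + cc g); split; [move=> g; rewrite addr_ge0 | exact: coordsD].
Qed.

Lemma negroot_coords_le0 a : neg a -> exists c, (forall g, c g <= 0) /\ coords a c.
Proof.
move/negrootE/posroot_coords_ge0 => [c [c0 /coordsN]]; rewrite opprK => ca.
by exists (fun g => - c g); split => // g; rewrite oppr_le0.
Qed.

Lemma coords_uniq a c d : coords a c -> coords a d -> forall g, g \in simples -> c g = d g.
Proof.
move=> ac ad g gs; apply/eqP; rewrite -subr_eq0; apply/eqP; move: g gs.
by apply: simples_free; under eq_bigr do rewrite scalerBl; rewrite sumrB -ac -ad subrr.
Qed.

(* Only the values on [simples] are meaningful. *)
Definition coord (a : V) : V -> R :=
  if pselect (exists c, coords a c) is left H then proj1_sig (cid H) else fun=> 0.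

Lemma coordP a : Rs a -> coords a (coord a).
Proof.
move=> Ra; rewrite /coord; case: pselect => [H|[]]; first by case: cid.
by have [/posroot_coords_ge0|/negroot_coords_le0] := root_pos_or_neg Ra => -[c [_ ac]]; exists c.
Qed.

Lemma coordE a c : Rs a -> coords a c -> forall g, g \in simples -> coord a g = c g.
Proof. by move=> Ra; apply: coords_uniq (coordP Ra). Qed.

Lemma coord_ge0 a g : pos a -> g \in simples -> 0 <= coord a g.
Proof.
by move=> pa gs; have [c [c0 ac]] := posroot_coords_ge0 pa; rewrite (coordE (posroot_root pa) ac).
Qed.

Lemma coord_le0 a g : neg a -> g \in simples -> coord a g <= 0.
Proof.
by move=> na gs; have [c [c0 ac]] := negroot_coords_le0 na; rewrite (coordE (negroot_root na) ac).
Qed.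

Lemma coordN a g : Rs a -> g \in simples -> coord (- a) g = - coord a g.
Proof. by move=> Ra gs; rewrite (coordE (rootN hRs Ra) (coordsN (coordP Ra))). Qed.

Lemma coordD a b g : Rs a -> Rs b -> Rs (a + b) -> g \in simples ->
  coord (a + b) g = coord a g + coord b g.
Proof. by move=> Ra Rb Rab gs; rewrite (coordE Rab (coordsD (coordP Ra) (coordP Rb))). Qed.

Lemma coord_simple a g : B a -> g \in simples -> coord a g = (g == a)%:R.
Proof. by move=> Ba gs; rewrite (coordE _ (coords_simple Ba)) //; case: Ba => [[]]. Qed.

Lemma suppE a b : Rs a -> supp Rs x a b <-> b \in simples /\ coord a b != 0.
Proof.
move=> Ra; split=> [[Bb [c [ac cb]]]|[bs cb]].
  have bs : b \in simples by apply/mem_simples.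
  by rewrite (coordE Ra (c := c)) // /coords -fsbig_simples.
split; first exact/mem_simples.
by exists (coord a); rewrite fsbig_simples; split => //; exact: coordP.
Qed.

Lemma coord_eq0 a b : Rs a -> b \in simples -> ~ supp Rs x a b -> coord a b = 0.
Proof. by move=> Ra bs nab; apply: contra_notP nab => /eqP cb; apply/suppE. Qed.

Lemma suppN a b : Rs a -> supp Rs x (- a) b <-> supp Rs x a b.
Proof.
move=> Ra; rewrite (suppE _ (rootN hRs Ra)) (suppE _ Ra).
by split=> -[bs]; rewrite coordN // oppr_eq0.
Qed.

Lemma supp_simple a : B a -> supp Rs x a a.
Proof.
move=> Ba; have [[Ra _] _] := Ba; have as_ : a \in simples by apply/mem_simples.
by apply/(suppE _ Ra); rewrite coord_simple // eqxx oner_eq0.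
Qed.

Lemma supp_posrootDl c d y : pos c -> pos d -> pos (c + d) ->
  supp Rs x c y -> supp Rs x (c + d) y.
Proof.
move=> pc pd pcd /(suppE _ (posroot_root pc)) [ys cy].
apply/(suppE _ (posroot_root pcd)); split => //.
have Rc := posroot_root pc; have Rd := posroot_root pd.
have Rcd := posroot_root pcd.
rewrite coordD // gt_eqF // ltr_pwDl ?coord_ge0 //.
by rewrite lt_neqAle eq_sym cy coord_ge0.
Qed.

Lemma closed_opp_supp Q' b : closed_subset Rs Q' -> pos `<=` Q' ->
  pos b -> Q' (- b) -> forall a, supp Rs x b a -> Q' (- a).
Proof.
move=> [_ addQ'] posQ'; move: b; apply: posroot_ind => b pb IH Qb a.
move/(suppE _ (posroot_root pb)) => [as_ cba].
case: (pselect (B b)) => [Bb|nBb].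
  by move: cba; rewrite coord_simple //; have [->|] := eqVneq a b; rewrite ?eqxx.
have [b1 [b2 [p1 p2 eb x1 x2]]] := posroot_decomp pb nBb.
have Rb1 := posroot_root p1; have Rb2 := posroot_root p2.
have Q1 : Q' (- b1).
  have e1 : - b1 = - b + b2 by rewrite eb opprD addrNK.
  by rewrite e1; apply: addQ' => //; [exact: posQ' | rewrite -e1; exact: rootN].
have Q2 : Q' (- b2).
  have e2 : - b2 = - b + b1 by rewrite eb opprD addrAC addNr add0r.
  by rewrite e2; apply: addQ' => //; [exact: posQ' | rewrite -e2; exact: rootN].
move: cba; rewrite eb coordD //; last by rewrite -eb; exact: posroot_root.
have [c1|c1 _] := eqVneq (coord b1 a) 0.
  by rewrite c1 add0r => c2; apply: (IH b2) => //; apply/(suppE _ Rb2).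
by apply: (IH b1) => //; apply/(suppE _ Rb1).
Qed.

Lemma closed_opp_of_supp Q' b : closed_subset Rs Q' ->
  pos b -> (forall a, supp Rs x b a -> Q' (- a)) -> Q' (- b).
Proof.
move=> [_ addQ']; move: b; apply: posroot_ind => b pb IH H.
case: (pselect (B b)) => [Bb|nBb]; first exact/H/supp_simple.
have [b1 [b2 [p1 p2 eb x1 x2]]] := posroot_decomp pb nBb.
have p12 : pos (b1 + b2) by rewrite -eb.
have p21 : pos (b2 + b1) by rewrite addrC -eb.
have Q1 : Q' (- b1).
  by apply: IH => // a /(supp_posrootDl p1 p2 p12); rewrite -eb; apply: H.
have Q2 : Q' (- b2).
  by apply: IH => // a /(supp_posrootDl p2 p1 p21); rewrite addrC -eb; apply: H.
by rewrite eb opprD; apply: addQ' => //; rewrite -opprD -eb; exact/(rootN hRs)/posroot_root.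
Qed.

Lemma QPhi_sub P : QPhi Rs x P `<=` Rs.
Proof. by move=> a [[]|[[]]]. Qed.

Lemma QPhi_coord_ge0 P a y : P `<=` B -> QPhi Rs x P a -> P y -> 0 <= coord a y.
Proof.
move=> PB [pa|[na Pa]] Py; have ys : y \in simples by apply/mem_simples/PB.
  exact: coord_ge0.
by rewrite (coord_eq0 (negroot_root na) ys) // => ay; rewrite -[False]/(set0 y) -Pa.
Qed.

Lemma QPhi_closed P : P `<=` B -> closed_subset Rs (QPhi Rs x P).
Proof.
move=> PB; split=> [|a b Qa Qb Rab]; first exact: QPhi_sub.
have [pab|nab] := root_pos_or_neg Rab; [by left | right; split => //].
apply/seteqP; split => [y [/(suppE _ Rab) [ys cy] Py]|//].
have [Ra Rb] := (QPhi_sub Qa, QPhi_sub Qb).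
move: cy (coord_le0 nab ys); rewrite coordD // => /negP cy le0; apply: cy.
by rewrite eq_le le0 addr_ge0 ?(QPhi_coord_ge0 PB _ Py).
Qed.

Lemma QPhi_parabolic P : P `<=` B -> parabolic Rs (QPhi Rs x P).
Proof.
move=> PB; split; first exact: QPhi_closed.
apply/seteqP; split => [a [Qa|[b Qb <-]]|a Ra].
- exact: QPhi_sub Qa.
- exact/(rootN hRs)/(QPhi_sub Qb).
have [pa|na] := root_pos_or_neg Ra; first by left; left.
by right; exists (- a); [left; apply/negrootE | rewrite opprK].
Qed.

Section Involution.
Variables (Q : set V) (S : 'M[R]_n).
Hypothesis hQ : parabolic Rs Q.
Hypothesis posQ : pos `<=` Q.
Hypothesis hS : involution Rs S.
Local Notation Psi := (PsiC Rs x Q S).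
Local Notation Qs := (QPhi Rs x Psi).

Lemma actK v : act S (act S v) = v.
Proof. by case: hS => SS _ _; rewrite /act -mulmxA SS mulmx1. Qed.

Lemma act_root a : Rs a -> Rs (act S a).
Proof. by case: hS => _ _ SR Ra; rewrite -SR; exists a. Qed.

Lemma actN v : act S (- v) = - act S v. Proof. exact: mulNmx. Qed.
Lemma actD u v : act S (u + v) = act S u + act S v. Proof. exact: mulmxDl. Qed.

Lemma coord_act g h : Rs g -> h \in simples ->
  coord (act S g) h = \sum_(b <- simples) coord g b * coord (act S b) h.
Proof.
move=> Rg hs; rewrite (coordE (act_root Rg)
  (c := fun h => \sum_(b <- simples) coord g b * coord (act S b) h)) //.
rewrite /coords {1}(coordP Rg) /act mulmx_suml.
under [RHS]eq_bigr => k _ do rewrite scaler_suml.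
rewrite exchange_big /=; apply: eq_big_seq => b /mem_simples [[Rb _] _].
rewrite -scalemxAl -/(act S b) {1}(coordP (act_root Rb)) scaler_sumr.
by apply: eq_bigr => k _; rewrite scalerA.
Qed.

Lemma Q_sub_root : Q `<=` Rs. Proof. by case: hQ => [[]]. Qed.

Lemma Q_opp_simple a : B a -> ~ nilpart Q a -> Q (- a).
Proof. by move=> [pa _] nna; apply: contra_notP nna => Qna; split => //; exact: posQ. Qed.

Lemma Q_opp_supp_neg a y : Q a -> neg a -> supp Rs x a y -> Q (- y).
Proof.
move=> Qa na ay; have cQ : closed_subset Rs Q by case: hQ.
apply: (closed_opp_supp cQ posQ (b := - a)).
- exact/negrootE.
- by rewrite opprK.
- exact/(suppN _ (negroot_root na)).
Qed.

Lemma Psi_sub_simple : Psi `<=` B. Proof. by move=> a [[[]]]. Qed.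

Lemma Q_sub_Qs : Q `<=` Qs.
Proof.
move=> a Qa; have [pa|na] := root_pos_or_neg (Q_sub_root Qa); [by left | right].
split => //; apply/seteqP; split => [y [ay [[[_ [_ nQy]] _] _ _]]|//].
exact/nQy/(Q_opp_supp_neg Qa na ay).
Qed.

Lemma coord_act_Psi_ge0 g b a : Q g -> b \in simples -> Psi a ->
  0 <= coord g b * coord (act S b) a.
Proof.
move=> Qg /mem_simples Bb [[[Ba _] _] _ noPsi].
have Rb := posroot_root (simple_posroot Bb); have Rg := Q_sub_root Qg.
have as_ : a \in simples by apply/mem_simples.
have bs : b \in simples by apply/mem_simples.
have [nilb|nnilb] := pselect (nilpart Q b); last first.
  rewrite (coord_eq0 (act_root Rb) as_) ?mulr0 // => ba.
  by apply: noPsi; exists b; split => //; left; split => // -[].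
have [pSb|nSb] := root_pos_or_neg (act_root Rb); last first.
  rewrite (coord_eq0 (act_root Rb) as_) ?mulr0 // => ba.
  by apply: noPsi; exists b; split => //; right; split => //; split.
have [pg|ng] := root_pos_or_neg Rg; first by rewrite mulr_ge0 // coord_ge0.
rewrite (coord_eq0 Rg bs) ?mul0r // => gb.
by case: nilb => _; apply; exact: (Q_opp_supp_neg Qg ng gb).
Qed.

Lemma actQ_sub_Qs g : Q g -> Qs (act S g).
Proof.
move=> Qg; have Rg := Q_sub_root Qg; have RSg := act_root Rg.
have [pSg|nSg] := root_pos_or_neg RSg; [by left | right; split => //].
apply/seteqP; split => [a [/(suppE _ RSg) [as_ ca] Pa]|//].
move/negP: ca; apply; rewrite eq_le coord_le0 //= coord_act //.
by rewrite big_seq sumr_ge0 // => b bs; exact: coord_act_Psi_ge0.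
Qed.

Lemma actQ_neg_supp b y :
  PhiCv Rs x Q b \/ PhiCm Rs x Q S b -> supp Rs x (act S b) y ->
  exists z, [/\ (act S @` Q) z, neg z & supp Rs x z y].
Proof.
have actQ_simple c : B c -> (act S @` Q) (act S c).
  by move=> Bc; exists c => //; exact/posQ/simple_posroot.
case=> [[Bb nPhib]|[[Bb _] nSb]] Sby.
  have RSb := act_root (posroot_root (simple_posroot Bb)).
  have [pSb|nSb] := root_pos_or_neg RSb; last by exists (act S b); split => //; exact: actQ_simple.
  exists (- act S b); split; last exact/(suppN _ RSb).
  - by exists (- b); [apply: Q_opp_simple => // nilb; apply: nPhib | exact: actN].
  - by apply/negrootE; rewrite opprK.
by exists (act S b); split => //; exact: actQ_simple.
Qed.

Lemma closed_opp_simple Q' y : closed_subset Rs Q' -> Q `|` act S @` Q `<=` Q' ->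
  B y -> ~ Psi y -> Q' (- y).
Proof.
move=> cQ' QQ' By nPsiy.
have posQ' : pos `<=` Q' by move=> a /posQ Qa; apply: QQ'; left.
have actQQ' a : Q a -> Q' (act S a) by move=> Qa; apply: QQ'; right; exists a.
have Ry := posroot_root (simple_posroot By); have RSy := act_root Ry.
have [nily|/(Q_opp_simple By) Qny] := pselect (nilpart Q y); last by apply: QQ'; left.
have [pSy|nSy] := root_pos_or_neg RSy; last first.
  by rewrite -[y]actK -actN; apply/actQQ'/posQ/negrootE.
have [nilSy|nnilSy] := pselect (nilpart Q (act S y)); last first.
  rewrite -[y]actK -actN; apply: actQQ'; apply: contra_notP nnilSy => QnSy.
  by split => //; exact: posQ.
have [b [Phib Sby]] : exists b,
    (PhiCv Rs x Q b \/ PhiCm Rs x Q S b) /\ supp Rs x (act S b) y.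
  by apply: contra_notP nPsiy => nb; split => //; split.
have [z [sQz nz zy]] := actQ_neg_supp Phib Sby.
apply: (closed_opp_supp cQ' posQ' (b := - z)); first exact/negrootE.
- by rewrite opprK; apply: QQ'; right.
- exact/(suppN _ (negroot_root nz)).
Qed.

Lemma QactQ_sub_Qs : Q `|` act S @` Q `<=` Qs.
Proof. by move=> z [Qz|[a Qa <-]]; [exact: Q_sub_Qs | exact: actQ_sub_Qs]. Qed.

Lemma Qs_min Q' : closed_subset Rs Q' -> Q `|` act S @` Q `<=` Q' -> Qs `<=` Q'.
Proof.
move=> cQ' QQ' a [pa|[na aPsi]]; first by apply: QQ'; left; exact: posQ.
rewrite -[a]opprK; apply: (closed_opp_of_supp cQ'); first exact/negrootE.
move=> y /(suppN _ (negroot_root na)) ay.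
have By : B y by have /(suppE _ (negroot_root na)) [/mem_simples] := ay.
apply: closed_opp_simple => // Psiy.
by have : (supp Rs x a `&` Psi) y by []; rewrite aPsi.
Qed.

Lemma Qs_totally_real : totally_real Qs S.
Proof.
have [_ addQs] := QPhi_closed Psi_sub_simple.
have Qs_sub_actQs : Qs `<=` act S @` Qs.
  apply: Qs_min.
    split=> [_ [a Qa <-]|_ _ [a Qa <-] [b Qb <-] Rab]; first exact/act_root/QPhi_sub/Qa.
    exists (a + b); last exact: actD.
    by apply: addQs => //; rewrite -[a]actK -[b]actK -actD; exact: act_root.
  move=> y [Qy|[a Qa <-]]; last by exists a => //; exact: Q_sub_Qs.
  by exists (act S y); [exact: actQ_sub_Qs | rewrite actK].
apply/seteqP; split => [_ [a Qa <-]|//].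
by have [b Qb <-] := Qs_sub_actQs a Qa; rewrite actK.
Qed.

Lemma closure_QactQ : Defs.closure Rs (Q `|` act S @` Q) = Qs.
Proof.
apply/seteqP; split => [y|y Qsy Q' [cQ' QQ']]; last exact: Qs_min Qsy.
by apply; split; [exact: QPhi_closed Psi_sub_simple | exact: QactQ_sub_Qs].
Qed.

(* For [a] in [Psi], [- a] is negative with [a] in its support, so it is missing from [Qs]. *)
Lemma fundamentalE : fundamental Rs Q S <-> Psi = set0.
Proof.
rewrite /fundamental closure_QactQ; split => [QsR|->]; last first.
  apply/seteqP; split => [a|a Ra]; first exact: QPhi_sub.
  by have [pa|na] := root_pos_or_neg Ra; [left | right; split; rewrite ?setI0].
apply/seteqP; split => [a Psia|//]; have Ba := Psi_sub_simple Psia.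
have Ra := posroot_root (simple_posroot Ba).
have : Qs (- a) by rewrite QsR; exact: rootN.
case=> [/negrootE|[_ aPsi]]; first exact: posroot_negroot (simple_posroot Ba).
have : (supp Rs x (- a) `&` Psi) a by split => //; apply/(suppN _ Ra)/supp_simple.
by rewrite aPsi.
Qed.

End Involution.

End Chamber.

Theorem theorem2p31 (R : realType) (n : nat) (Rs Q : set 'rV[R]_n)
    (x : 'rV[R]_n) (S : 'M[R]_n) :
  root_system Rs -> parabolic Rs Q -> regular Rs x ->
  posroots Rs x `<=` Q -> involution Rs S ->
  let Qs := QPhi Rs x (PsiC Rs x Q S) in
  [/\ parabolic Rs Qs,
      Q `|` act S @` Q `<=` Qs,
      (forall Q', closed_subset Rs Q' -> Q `|` act S @` Q `<=` Q' -> Qs `<=` Q'),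
      totally_real Qs S &
      (fundamental Rs Q S <-> PsiC Rs x Q S = set0)].
Proof.
move=> hRs hQ hx posQ hS Qs; split.
- exact/(QPhi_parabolic hRs hx)/Psi_sub_simple.
- exact: QactQ_sub_Qs.
- exact: Qs_min.
- exact: Qs_totally_real.
- exact: fundamentalE.
Qed.
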